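(* Let $\Delta x>0$, let $a=(a_j)_{j\in\mathbb Z}$ be a sequence in $\ell^2_\Delta(\mathbb Z)$ and $\gamma\in[0,\frac12)$. Then $$\Big\langle D_+D_+D_-(a),D\Big(\frac{a^2}{2}\Big)\Big\rangle\le\frac{\Delta x^{\frac12-\gamma}+\|a\|_{\ell^\infty}+9\|a\|^2_{\ell^\infty}\Delta x^{\gamma-\frac12}}{2}\|D_+D_-(a)\|^2_{\ell^2_\Delta}+\|a\|_{\ell^\infty}\|D_+D(a)\|^2_{\ell^2_\Delta}.$$
   Context: For sequences: $D_+(a)_j=(a_{j+1}-a_j)/\Delta x$, $D_-(a)_j=(a_j-a_{j-1})/\Delta x$, $D=\frac12(D_++D_-)$; $a^2$ is componentwise; $\langle a,b\rangle=\Delta x\sum_ja_jb_j$, $\|a\|_{\ell^2_\Delta}=\langle a,a\rangle^{1/2}$, $\|a\|_{\ell^\infty}=\sup_j|a_j|$. *)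

From Stdlib Require Import Reals ZArith.
From Coquelicot Require Import Coquelicot.
Open Scope R_scope.

Definition zseq := Z -> R.

Definition zsummable (f : zseq) : Prop :=
  ex_series (fun n : nat => f (Z.of_nat n)) /\
  ex_series (fun n : nat => f (- Z.of_nat (S n))%Z).

Definition zsum (f : zseq) : R :=
  Series (fun n : nat => f (Z.of_nat n)) +
  Series (fun n : nat => f (- Z.of_nat (S n))%Z).

Definition Dp (dx : R) (a : zseq) : zseq := fun j => (a (j + 1)%Z - a j) / dx.
Definition Dm (dx : R) (a : zseq) : zseq := fun j => (a j - a (j - 1)%Z) / dx.
Definition Dc (dx : R) (a : zseq) : zseq := fun j => (Dp dx a j + Dm dx a j) / 2.

Definition ip (dx : R) (a b : zseq) : R := dx * zsum (fun j => a j * b j).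
Definition l2norm (dx : R) (a : zseq) : R := sqrt (ip dx a a).

Definition in_l2 (a : zseq) : Prop := zsummable (fun j => a j ^ 2).

(* ||a||_{l^infty} = sup_j |a_j| (finite for a in l^2). *)
Definition linf (a : zseq) : R :=
  real (Lub_Rbar (fun r => exists j : Z, r = Rabs (a j))).

(* Write p = D+ a and w = D+ D- a.  Summation by parts turns the left-hand side into
   -<w, D-(D(a^2/2))>, and the discrete product rule splits D-(D(a^2/2))_j into
   (D- D a)_j (a_{j+1} + a_{j-1})/2 plus a product q_j of two averages of p.  The first
   part costs ||a||_oo (|w|^2/2 + |D- D a|^2), and ||D- D a|| = ||D+ D a|| by shift
   invariance.  Young's inequality with weight eps = dx^(1/2-gamma) bounds -w q by
   eps |w|^2/2 + q^2/(2 eps) with sum q^2 <= sum p^4.  Finally the discrete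
   Gagliardo-Nirenberg inequality sum p^4 <= 9 ||a||_oo^2 sum w^2 comes from one more
   summation by parts, sum p^4 = -sum a D-(p^3), where D-(p^3)_j = w_j (p_j^2 + p_j p_{j-1} + p_{j-1}^2). *)

From Stdlib Require Import Reals ZArith Lra Lia Psatz.
From Coquelicot Require Import Coquelicot.
Open Scope R_scope.

Lemma zsummable_ext f g : (forall j, f j = g j) -> zsummable f -> zsummable g.
Proof.
  intros Hfg [Hpos Hneg]; split;
    [eapply ex_series_ext; [|exact Hpos] | eapply ex_series_ext; [|exact Hneg]];
    intro n; apply Hfg.
Qed.

Lemma zsum_ext f g : (forall j, f j = g j) -> zsum f = zsum g.
Proof. intros Hfg; unfold zsum; f_equal; apply Series_ext; auto. Qed.

Lemma zsummable_plus f g :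
  zsummable f -> zsummable g -> zsummable (fun j => f j + g j).
Proof. intros [Hf1 Hf2] [Hg1 Hg2]; split; apply (@ex_series_plus _ R_NormedModule); auto. Qed.

Lemma zsummable_scal c f : zsummable f -> zsummable (fun j => c * f j).
Proof. intros [Hf1 Hf2]; split; apply (@ex_series_scal_l _ R_NormedModule); auto. Qed.

Lemma zsum_plus f g :
  zsummable f -> zsummable g -> zsum (fun j => f j + g j) = zsum f + zsum g.
Proof. intros [Hf1 Hf2] [Hg1 Hg2]; unfold zsum; rewrite !Series_plus; auto; ring. Qed.

Lemma zsum_scal c f : zsum (fun j => c * f j) = c * zsum f.
Proof. unfold zsum; rewrite !Series_scal_l; ring. Qed.

Lemma zsum_opp f : zsum (fun j => - f j) = - zsum f.
Proof.
  rewrite (zsum_ext _ (fun j => -1 * f j)) by (intro; ring).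
  rewrite zsum_scal; ring.
Qed.

Lemma zsummable_le f g :
  (forall j, Rabs (g j) <= f j) -> zsummable f -> zsummable g.
Proof.
  intros Hgf [Hf1 Hf2]; split;
    [ eapply (@ex_series_le _ R_CompleteNormedModule); [|exact Hf1]
    | eapply (@ex_series_le _ R_CompleteNormedModule); [|exact Hf2] ];
    intro n; apply Hgf.
Qed.

Lemma Series_nonneg (u : nat -> R) : ex_series u -> (forall n, 0 <= u n) -> 0 <= Series u.
Proof.
  intros Hu Hu0.
  rewrite <- (Rmult_0_l (Series u)), <- Series_scal_l.
  apply Series_le; auto; intro n; specialize (Hu0 n); lra.
Qed.

Lemma zsum_nonneg f : zsummable f -> (forall j, 0 <= f j) -> 0 <= zsum f.
Proof.
  intros [Hpos Hneg] Hf; unfold zsum.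
  apply Rplus_le_le_0_compat; apply Series_nonneg; auto.
Qed.

Lemma zsum_le f g :
  zsummable f -> zsummable g -> (forall j, f j <= g j) -> zsum f <= zsum g.
Proof.
  intros Hf Hg Hfg.
  assert (Hdiff : 0 <= zsum (fun j => g j + -1 * f j)).
  { apply zsum_nonneg; [apply zsummable_plus, zsummable_scal; auto|].
    intro j; specialize (Hfg j); lra. }
  rewrite zsum_plus, zsum_scal in Hdiff by (auto; apply zsummable_scal; auto); lra.
Qed.

Lemma zsummable_succ f : zsummable f <-> zsummable (fun j => f (j + 1)%Z).
Proof.
  unfold zsummable.
  rewrite (ex_series_incr_1 (fun n : nat => f (Z.of_nat n))).
  rewrite (ex_series_incr_1 (fun n : nat => f (- Z.of_nat (S n) + 1)%Z)).
  split; intros [Hpos Hneg]; split;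
    [ eapply ex_series_ext; [|exact Hpos] | eapply ex_series_ext; [|exact Hneg]
    | eapply ex_series_ext; [|exact Hpos] | eapply ex_series_ext; [|exact Hneg] ];
    intro n; cbv beta; f_equal; lia.
Qed.

Lemma zsum_succ f : zsummable f -> zsum (fun j => f (j + 1)%Z) = zsum f.
Proof.
  intros Hf; pose proof (proj1 (zsummable_succ f) Hf) as [_ Hneg'].
  destruct Hf as [Hpos _]; unfold zsum.
  rewrite (Series_incr_1 (fun n : nat => f (Z.of_nat n))) by exact Hpos.
  rewrite (Series_incr_1 (fun n : nat => f (- Z.of_nat (S n) + 1)%Z)) by exact Hneg'.
  rewrite (Series_ext (fun n : nat => f (Z.of_nat (S n)))
                      (fun n : nat => f (Z.of_nat n + 1)%Z)) by (intro; f_equal; lia).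
  rewrite (Series_ext (fun n : nat => f (- Z.of_nat (S (S n)) + 1)%Z)
                      (fun n : nat => f (- Z.of_nat (S n))%Z)) by (intro; f_equal; lia).
  simpl; ring.
Qed.

Lemma zsummable_zsum_shift (k : Z) f :
  zsummable f ->
  zsummable (fun j => f (j + k)%Z) /\ zsum (fun j => f (j + k)%Z) = zsum f.
Proof.
  revert f; induction k as [|k IHk|k IHk] using Z.peano_ind; intros f Hf.
  - split; [eapply zsummable_ext; [|exact Hf] | apply zsum_ext];
      intro j; rewrite Z.add_0_r; reflexivity.
  - destruct (IHk f Hf) as [Hk Ek].
    assert (Hj : forall j, f (j + 1 + k)%Z = f (j + Z.succ k)%Z) by (intro; f_equal; lia).
    split.
    + eapply zsummable_ext; [exact Hj|]; apply (zsummable_succ (fun j => f (j + k)%Z)), Hk.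
    + rewrite <- (zsum_ext _ _ Hj), (zsum_succ (fun j => f (j + k)%Z)); auto.
  - destruct (IHk f Hf) as [Hk Ek].
    set (g := fun j => f (j + Z.pred k)%Z).
    assert (Hj : forall j, f (j + k)%Z = g (j + 1)%Z) by (intro; unfold g; f_equal; lia).
    assert (Hg : zsummable g).
    { apply zsummable_succ; eapply zsummable_ext; [exact Hj | exact Hk]. }
    split; [exact Hg|].
    rewrite <- (zsum_succ g Hg), <- (zsum_ext _ _ Hj); exact Ek.
Qed.

Lemma zsummable_shift (k : Z) f : zsummable f -> zsummable (fun j => f (j + k)%Z).
Proof. intros Hf; exact (proj1 (zsummable_zsum_shift k f Hf)). Qed.

Lemma zsum_shift (k : Z) f : zsummable f -> zsum (fun j => f (j + k)%Z) = zsum f.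
Proof. intros Hf; exact (proj2 (zsummable_zsum_shift k f Hf)). Qed.

Lemma zsummable_pred f : zsummable f -> zsummable (fun j => f (j - 1)%Z).
Proof. exact (zsummable_shift (-1) f). Qed.

Lemma zsum_pred f : zsummable f -> zsum (fun j => f (j - 1)%Z) = zsum f.
Proof. exact (zsum_shift (-1) f). Qed.

Lemma Series_ge_term (u : nat -> R) n :
  ex_series u -> (forall k, 0 <= u k) -> u n <= Series u.
Proof.
  intros Hu Hu0.
  rewrite (Series_incr_n u (S n)) by (auto; lia); simpl Nat.pred.
  assert (Htail : 0 <= Series (fun k => u (S n + k)%nat)).
  { apply Series_nonneg; [apply ex_series_incr_n, Hu | intro; apply Hu0]. }
  assert (Hhead : u n <= sum_f_R0 u n).
  { destruct n as [|n]; simpl; [lra|].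
    pose proof (cond_pos_sum u n Hu0); lra. }
  lra.
Qed.

Lemma zsum_ge_term f j : zsummable f -> (forall i, 0 <= f i) -> f j <= zsum f.
Proof.
  intros [Hpos Hneg] Hf0; unfold zsum.
  pose proof (Series_nonneg _ Hpos (fun n => Hf0 _)).
  pose proof (Series_nonneg _ Hneg (fun n => Hf0 _)).
  destruct (Z_le_gt_dec 0 j) as [Hj|Hj].
  - destruct (Z_of_nat_complete j Hj) as [n ->].
    pose proof (Series_ge_term _ n Hpos (fun n => Hf0 _)); lra.
  - replace j with (- Z.of_nat (S (Z.to_nat (- j - 1))))%Z by lia.
    pose proof (Series_ge_term _ (Z.to_nat (- j - 1)) Hneg (fun n => Hf0 _)); lra.
Qed.

Lemma in_l2_bounded f j : in_l2 f -> Rabs (f j) <= sqrt (zsum (fun i => f i ^ 2)).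
Proof.
  intros Hf.
  rewrite <- sqrt_Rsqr_abs, Rsqr_pow2.
  apply sqrt_le_1_alt, (zsum_ge_term (fun i => f i ^ 2)); auto; intro; apply pow2_ge_0.
Qed.

Lemma linf_ge a j : in_l2 a -> Rabs (a j) <= linf a.
Proof.
  intros Ha; unfold linf.
  destruct (Lub_Rbar_correct (fun r => exists i : Z, r = Rabs (a i))) as [Hub Hlub].
  assert (Hle : Rbar_le (Rabs (a j)) (Lub_Rbar (fun r => exists i : Z, r = Rabs (a i))))
    by (apply Hub; exists j; reflexivity).
  assert (Hfin : Rbar_le (Lub_Rbar (fun r => exists i : Z, r = Rabs (a i)))
                         (sqrt (zsum (fun i => a i ^ 2)))).
  { apply Hlub; intros r [i ->]; apply in_l2_bounded, Ha. }
  destruct (Lub_Rbar _); simpl in *; tauto.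
Qed.

Lemma in_l2_ext f g : (forall j, f j = g j) -> in_l2 f -> in_l2 g.
Proof. intros Hfg; apply zsummable_ext; intro j; rewrite Hfg; reflexivity. Qed.

Lemma in_l2_scal c f : in_l2 f -> in_l2 (fun j => c * f j).
Proof.
  intros Hf; apply (zsummable_ext (fun j => c ^ 2 * f j ^ 2));
    [intro; ring | apply zsummable_scal, Hf].
Qed.

Lemma in_l2_plus f g : in_l2 f -> in_l2 g -> in_l2 (fun j => f j + g j).
Proof.
  intros Hf Hg; apply (zsummable_le (fun j => 2 * f j ^ 2 + 2 * g j ^ 2)).
  - intro j; rewrite Rabs_right by (apply Rle_ge, pow2_ge_0).
    pose proof (pow2_ge_0 (f j - g j)); nra.
  - apply zsummable_plus; apply zsummable_scal; auto.
Qed.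

Lemma in_l2_shift (k : Z) f : in_l2 f -> in_l2 (fun j => f (j + k)%Z).
Proof. apply (zsummable_shift k (fun j => f j ^ 2)). Qed.

Lemma zsummable_mul f g : in_l2 f -> in_l2 g -> zsummable (fun j => f j * g j).
Proof.
  intros Hf Hg; apply (zsummable_le (fun j => / 2 * f j ^ 2 + / 2 * g j ^ 2)).
  - intro j; rewrite Rabs_mult, <- (pow2_abs (f j)), <- (pow2_abs (g j)).
    pose proof (pow2_ge_0 (Rabs (f j) - Rabs (g j))); nra.
  - apply zsummable_plus; apply zsummable_scal; auto.
Qed.

Lemma in_l2_mul f g : in_l2 f -> in_l2 g -> in_l2 (fun j => f j * g j).
Proof.
  intros Hf Hg; apply (zsummable_le (fun j => zsum (fun i => f i ^ 2) * g j ^ 2)).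
  - intro j; rewrite Rabs_right by (apply Rle_ge, pow2_ge_0).
    rewrite Rpow_mult_distr; apply Rmult_le_compat_r; [apply pow2_ge_0|].
    apply (zsum_ge_term (fun i => f i ^ 2)); auto; intro; apply pow2_ge_0.
  - apply zsummable_scal, Hg.
Qed.

Lemma zsummable_pow4 f : in_l2 f -> zsummable (fun j => f j ^ 4).
Proof.
  intros Hf; apply (zsummable_ext (fun j => f j ^ 2 * f j ^ 2)); [intro; ring|].
  assert (Hf2 : in_l2 (fun j => f j ^ 2)).
  { apply (in_l2_ext (fun j => f j * f j)); [intro; ring | apply in_l2_mul; exact Hf]. }
  apply zsummable_mul; exact Hf2.
Qed.

Lemma in_l2_half_sq f : in_l2 f -> in_l2 (fun j => f j ^ 2 / 2).
Proof.
  intros Hf; apply (in_l2_ext (fun j => / 2 * (f j * f j))); [intro; field|].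
  apply in_l2_scal, in_l2_mul; exact Hf.
Qed.

Lemma in_l2_Dp dx f : in_l2 f -> in_l2 (Dp dx f).
Proof.
  intros Hf; apply (in_l2_ext (fun j => / dx * (f (j + 1)%Z + -1 * f j))).
  - intro j; unfold Dp, Rdiv; ring.
  - apply in_l2_scal, in_l2_plus; [apply in_l2_shift | apply in_l2_scal]; exact Hf.
Qed.

Lemma in_l2_Dm dx f : in_l2 f -> in_l2 (Dm dx f).
Proof.
  intros Hf; apply (in_l2_ext (fun j => / dx * (f j + -1 * f (j - 1)%Z))).
  - intro j; unfold Dm, Rdiv; ring.
  - apply in_l2_scal, in_l2_plus; [|apply in_l2_scal, (in_l2_shift (-1))]; exact Hf.
Qed.

Lemma in_l2_Dc dx f : in_l2 f -> in_l2 (Dc dx f).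
Proof.
  intros Hf; apply (in_l2_ext (fun j => / 2 * (Dp dx f j + Dm dx f j))).
  - intro j; unfold Dc, Rdiv; ring.
  - apply in_l2_scal, in_l2_plus; [apply in_l2_Dp | apply in_l2_Dm]; exact Hf.
Qed.

Lemma l2norm_sq dx f : 0 <= dx -> in_l2 f -> l2norm dx f ^ 2 = dx * zsum (fun j => f j ^ 2).
Proof.
  intros Hdx Hf; unfold l2norm, ip.
  rewrite (zsum_ext (fun j => f j * f j) (fun j => f j ^ 2)) by (intro; ring).
  apply pow2_sqrt, Rmult_le_pos; [exact Hdx|].
  apply zsum_nonneg; [exact Hf | intro; apply pow2_ge_0].
Qed.

Lemma zsum_Dp_mul dx f g : in_l2 f -> in_l2 g ->
  zsum (fun j => Dp dx f j * g j) = - zsum (fun j => f j * Dm dx g j).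
Proof.
  intros Hf Hg.
  set (h := fun j => f j * g (j - 1)%Z).
  assert (Hh : zsummable h) by (apply zsummable_mul; [|apply (in_l2_shift (-1))]; auto).
  assert (Hfg : zsummable (fun j => f j * g j)) by (apply zsummable_mul; auto).
  rewrite (zsum_ext _ (fun j => / dx * h (j + 1)%Z + - / dx * (f j * g j)))
    by (intro j; unfold h, Dp, Rdiv; rewrite Z.add_simpl_r; ring).
  rewrite (zsum_ext (fun j => f j * Dm dx g j) (fun j => / dx * (f j * g j) + - / dx * h j))
    by (intro j; unfold h, Dm, Rdiv; ring).
  pose proof (zsummable_shift 1 h Hh) as Hh1.
  rewrite !zsum_plus, !zsum_scal, (zsum_shift 1 h) by (auto; apply zsummable_scal; auto).
  ring.
Qed.

Lemma Dp_Dm_comm dx a j : Dp dx (Dm dx a) j = Dm dx (Dp dx a) j.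
Proof. unfold Dp, Dm; rewrite Z.add_simpl_r, Z.sub_add; reflexivity. Qed.

Lemma Dp_eq_Dm_succ dx f j : Dp dx f j = Dm dx f (j + 1)%Z.
Proof. unfold Dp, Dm; rewrite Z.add_simpl_r; reflexivity. Qed.

Lemma Dm_cube dx f j :
  Dm dx (fun i => f i ^ 3) j = Dm dx f j * (f j ^ 2 + f j * f (j - 1)%Z + f (j - 1)%Z ^ 2).
Proof. unfold Dm, Rdiv; ring. Qed.

Lemma Dm_Dc_half_sq dx a j : dx <> 0 ->
  Dm dx (Dc dx (fun i => a i ^ 2 / 2)) j
  = Dm dx (Dc dx a) j * ((a (j + 1)%Z + a (j - 1)%Z) / 2)
    + (Dp dx a (j - 1)%Z + Dp dx a (j - 1 - 1)%Z) / 2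
      * ((Dp dx a j + Dp dx a (j - 1 - 1)%Z) / 2).
Proof. intros Hdx; unfold Dc, Dp, Dm; rewrite !Z.sub_add; field; exact Hdx. Qed.

Lemma neg_mul_le_of_abs_le x y M L : Rabs M <= L ->
  - (x * y * M) <= L * (x ^ 2 / 2 + y ^ 2).
Proof.
  intros HM.
  assert (Hxy : Rabs (x * y) <= x ^ 2 / 2 + y ^ 2 / 2).
  { rewrite Rabs_mult, <- (pow2_abs x), <- (pow2_abs y).
    pose proof (pow2_ge_0 (Rabs x - Rabs y)); nra. }
  assert (HL : 0 <= L) by (pose proof (Rabs_pos M); lra).
  apply Rle_trans with (Rabs (x * y) * L).
  - pose proof (Rle_abs (- (x * y * M))) as Habs; rewrite Rabs_Ropp, Rabs_mult in Habs.
    pose proof (Rabs_pos (x * y)); nra.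
  - pose proof (pow2_ge_0 y); nra.
Qed.

Lemma young eps x y : 0 < eps -> - (x * y) <= eps / 2 * x ^ 2 + y ^ 2 / (2 * eps).
Proof.
  intros Heps.
  assert (Hsq : 0 <= (eps * x + y) ^ 2 / (2 * eps))
    by (apply Rmult_le_pos; [apply pow2_ge_0 | left; apply Rinv_0_lt_compat; lra]).
  replace ((eps * x + y) ^ 2 / (2 * eps)) with (eps / 2 * x ^ 2 + y ^ 2 / (2 * eps) + x * y)
    in Hsq by (field; lra).
  lra.
Qed.

Lemma sq_avg_mul_avg_le x y z :
  ((x + z) / 2 * ((y + z) / 2)) ^ 2 <= (x ^ 4 + y ^ 4 + 2 * z ^ 4) / 4.
Proof.
  assert (Hx : ((x + z) / 2) ^ 2 <= (x ^ 2 + z ^ 2) / 2) by (pose proof (pow2_ge_0 (x - z)); nra).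
  assert (Hy : ((y + z) / 2) ^ 2 <= (y ^ 2 + z ^ 2) / 2) by (pose proof (pow2_ge_0 (y - z)); nra).
  replace (((x + z) / 2 * ((y + z) / 2)) ^ 2) with (((x + z) / 2) ^ 2 * ((y + z) / 2) ^ 2) by ring.
  apply Rle_trans with ((x ^ 2 + z ^ 2) / 2 * ((y ^ 2 + z ^ 2) / 2)).
  - apply Rmult_le_compat; auto; apply pow2_ge_0.
  - pose proof (pow2_ge_0 (x ^ 2 - y ^ 2)); pose proof (pow2_ge_0 (x ^ 2 - z ^ 2));
      pose proof (pow2_ge_0 (y ^ 2 - z ^ 2)); nra.
Qed.

Lemma neg_mul_cube_diff_le A w x y L : Rabs A <= L ->
  - (A * w * (x ^ 2 + x * y + y ^ 2)) <= 9 * L ^ 2 * w ^ 2 / 2 + (x ^ 4 + y ^ 4) / 4.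
Proof.
  intros HA.
  set (Y := x ^ 2 + x * y + y ^ 2).
  assert (HY : 0 <= Y <= 3 / 2 * (x ^ 2 + y ^ 2))
    by (unfold Y; pose proof (pow2_ge_0 (x + y)); pose proof (pow2_ge_0 (x - y)); nra).
  assert (HL : 0 <= L) by (pose proof (Rabs_pos A); lra).
  apply Rle_trans with (L * Rabs w * Y).
  { pose proof (Rle_abs (- (A * w * Y))) as Habs.
    rewrite Rabs_Ropp, !Rabs_mult, (Rabs_right Y) in Habs by lra.
    apply Rle_trans with (1 := Habs).
    apply Rmult_le_compat_r; [lra|].
    apply Rmult_le_compat_r; [apply Rabs_pos | exact HA]. }
  set (s := (x ^ 2 + y ^ 2) / 2).
  apply Rle_trans with (3 * L * Rabs w * s).
  { assert (0 <= L * Rabs w) by (apply Rmult_le_pos; [exact HL | apply Rabs_pos]).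
    unfold s; nra. }
  pose proof (pow2_ge_0 (3 * L * Rabs w - s)).
  assert (s ^ 2 <= (x ^ 4 + y ^ 4) / 2) by (unfold s; pose proof (pow2_ge_0 (x ^ 2 - y ^ 2)); nra).
  rewrite <- (pow2_abs w); nra.
Qed.

Lemma zsum_Dp_pow4_le dx a L : in_l2 a -> (forall j, Rabs (a j) <= L) ->
  zsum (fun j => Dp dx a j ^ 4) <= 9 * L ^ 2 * zsum (fun j => Dp dx (Dm dx a) j ^ 2).
Proof.
  intros Ha HL.
  set (p := Dp dx a); set (w := Dp dx (Dm dx a)).
  assert (Hp : in_l2 p) by (apply in_l2_Dp, Ha).
  assert (Hp3 : in_l2 (fun j => p j ^ 3)).
  { apply (in_l2_ext (fun j => p j * (p j * p j))); [intro; ring|].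
    apply in_l2_mul; [|apply in_l2_mul]; exact Hp. }
  assert (HP : zsummable (fun j => p j ^ 4)) by (apply zsummable_pow4, Hp).
  assert (HP1 : zsummable (fun j => p (j - 1)%Z ^ 4)) by exact (zsummable_pred _ HP).
  assert (Hw : zsummable (fun j => w j ^ 2)) by (apply in_l2_Dp, in_l2_Dm, Ha).
  set (T := fun j => a j * w j * (p j ^ 2 + p j * p (j - 1)%Z + p (j - 1)%Z ^ 2)).
  assert (HT : forall j, T j = a j * Dm dx (fun i => p i ^ 3) j).
  { intro j; unfold T; rewrite Dm_cube; unfold w, p; rewrite Dp_Dm_comm; ring. }
  assert (HTs : zsummable (fun j => - T j)).
  { apply (zsummable_ext (fun j => -1 * (a j * Dm dx (fun i => p i ^ 3) j)));
      [intro; rewrite HT; ring|].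
    apply zsummable_scal, zsummable_mul; [exact Ha | apply in_l2_Dm, Hp3]. }
  assert (Hparts : zsum (fun j => p j ^ 4) = zsum (fun j => - T j)).
  { rewrite (zsum_ext _ (fun j => Dp dx a j * p j ^ 3)) by (intro; unfold p; ring).
    rewrite zsum_Dp_mul, <- zsum_opp by assumption.
    apply zsum_ext; intro j; rewrite HT; reflexivity. }
  assert (Hle : zsum (fun j => - T j)
                <= zsum (fun j => 9 * L ^ 2 / 2 * w j ^ 2 + (/ 4 * p j ^ 4 + / 4 * p (j - 1)%Z ^ 4))).
  { apply zsum_le; [exact HTs | repeat apply zsummable_plus; apply zsummable_scal; assumption|].
    intro j; unfold T; pose proof (neg_mul_cube_diff_le (a j) (w j) (p j) (p (j - 1)%Z) L (HL j)).
    lra. }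
  rewrite !zsum_plus, !zsum_scal, (zsum_pred (fun j => p j ^ 4)) in Hle
    by (auto; repeat apply zsummable_plus; apply zsummable_scal; assumption).
  lra.
Qed.

Lemma neg_mul_Dm_Dc_half_sq_le dx eps L a j :
  dx <> 0 -> 0 < eps -> (forall i, Rabs (a i) <= L) ->
  - (Dp dx (Dm dx a) j * Dm dx (Dc dx (fun i => a i ^ 2 / 2)) j)
  <= (L / 2 + eps / 2) * Dp dx (Dm dx a) j ^ 2 + L * Dm dx (Dc dx a) j ^ 2
     + / (8 * eps) * (Dp dx a (j - 1)%Z ^ 4 + 2 * Dp dx a (j - 1 - 1)%Z ^ 4 + Dp dx a j ^ 4).
Proof.
  intros Hdx Heps HL.
  rewrite Dm_Dc_half_sq by exact Hdx.
  set (w := Dp dx (Dm dx a) j); set (m := Dm dx (Dc dx a) j).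
  set (x := Dp dx a (j - 1)%Z); set (y := Dp dx a j); set (z := Dp dx a (j - 1 - 1)%Z).
  set (q := (x + z) / 2 * ((y + z) / 2)).
  assert (Havg : Rabs ((a (j + 1)%Z + a (j - 1)%Z) / 2) <= L).
  { pose proof (HL (j + 1)%Z) as H1; pose proof (HL (j - 1)%Z) as H2.
    apply Rabs_le_between in H1, H2; apply Rabs_le_between; lra. }
  pose proof (neg_mul_le_of_abs_le w m _ L Havg).
  pose proof (young eps w q Heps).
  assert (Hq : q ^ 2 / (2 * eps) <= / (8 * eps) * (x ^ 4 + 2 * z ^ 4 + y ^ 4)).
  { replace (/ (8 * eps) * (x ^ 4 + 2 * z ^ 4 + y ^ 4))
      with ((x ^ 4 + y ^ 4 + 2 * z ^ 4) / 4 / (2 * eps)) by (field; lra).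
    apply Rmult_le_compat_r; [left; apply Rinv_0_lt_compat; lra|].
    apply sq_avg_mul_avg_le. }
  lra.
Qed.

Lemma zsum_neg_mul_Dm_Dc_half_sq_le dx eps L a :
  0 < dx -> 0 < eps -> in_l2 a -> (forall j, Rabs (a j) <= L) ->
  zsum (fun j => - (Dp dx (Dm dx a) j * Dm dx (Dc dx (fun i => a i ^ 2 / 2)) j))
  <= (L / 2 + eps / 2) * zsum (fun j => Dp dx (Dm dx a) j ^ 2)
     + L * zsum (fun j => Dm dx (Dc dx a) j ^ 2)
     + / (2 * eps) * zsum (fun j => Dp dx a j ^ 4).
Proof.
  intros Hdx Heps Ha HL.
  set (p := Dp dx a); set (w := Dp dx (Dm dx a)); set (m := Dm dx (Dc dx a)).
  set (E := Dc dx (fun j => a j ^ 2 / 2)).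
  assert (Hw : in_l2 w) by (apply in_l2_Dp, in_l2_Dm, Ha).
  assert (Hm : in_l2 m) by (apply in_l2_Dm, in_l2_Dc, Ha).
  assert (HE : in_l2 E) by (apply in_l2_Dc, in_l2_half_sq, Ha).
  assert (HP : zsummable (fun j => p j ^ 4)) by (apply zsummable_pow4, in_l2_Dp, Ha).
  assert (HP1 : zsummable (fun j => p (j - 1)%Z ^ 4)) by exact (zsummable_pred _ HP).
  assert (HP2 : zsummable (fun j => p (j - 1 - 1)%Z ^ 4)) by exact (zsummable_pred _ HP1).
  assert (HPs : zsummable (fun j => p (j - 1)%Z ^ 4 + 2 * p (j - 1 - 1)%Z ^ 4 + p j ^ 4))
    by (repeat apply zsummable_plus; try apply zsummable_scal; assumption).
  assert (HPsum : zsum (fun j => p (j - 1)%Z ^ 4 + 2 * p (j - 1 - 1)%Z ^ 4 + p j ^ 4)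
                  = 4 * zsum (fun j => p j ^ 4)).
  { rewrite !zsum_plus, zsum_scal by (try apply zsummable_plus; try apply zsummable_scal; assumption).
    rewrite (zsum_pred (fun j => p (j - 1)%Z ^ 4)), (zsum_pred (fun j => p j ^ 4)) by assumption.
    ring. }
  apply Rle_trans with (zsum (fun j => (L / 2 + eps / 2) * w j ^ 2 + L * m j ^ 2
    + / (8 * eps) * (p (j - 1)%Z ^ 4 + 2 * p (j - 1 - 1)%Z ^ 4 + p j ^ 4))).
  - apply zsum_le.
    + apply (zsummable_ext (fun j => -1 * (w j * Dm dx E j))); [intro; ring|].
      apply zsummable_scal, zsummable_mul; [exact Hw | apply in_l2_Dm, HE].
    + repeat apply zsummable_plus; apply zsummable_scal; assumption.
    + intro j; apply neg_mul_Dm_Dc_half_sq_le; lra || assumption.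
  - rewrite !zsum_plus, !zsum_scal, HPsum
      by (try apply zsummable_plus; apply zsummable_scal; assumption).
    right; field; lra.
Qed.

Lemma ip_Dp_Dp_Dm_Dc_half_sq_le dx eps L a :
  0 < dx -> 0 < eps -> in_l2 a -> (forall j, Rabs (a j) <= L) ->
  ip dx (Dp dx (Dp dx (Dm dx a))) (Dc dx (fun j => a j ^ 2 / 2))
  <= (eps + L + 9 * L ^ 2 / eps) / 2 * l2norm dx (Dp dx (Dm dx a)) ^ 2
     + L * l2norm dx (Dp dx (Dc dx a)) ^ 2.
Proof.
  intros Hdx Heps Ha HL.
  set (W := zsum (fun j => Dp dx (Dm dx a) j ^ 2)).
  set (M := zsum (fun j => Dm dx (Dc dx a) j ^ 2)).
  set (S4 := zsum (fun j => Dp dx a j ^ 4)).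
  assert (Hw : in_l2 (Dp dx (Dm dx a))) by (apply in_l2_Dp, in_l2_Dm, Ha).
  assert (Hparts : ip dx (Dp dx (Dp dx (Dm dx a))) (Dc dx (fun j => a j ^ 2 / 2))
    = dx * zsum (fun j => - (Dp dx (Dm dx a) j * Dm dx (Dc dx (fun i => a i ^ 2 / 2)) j))).
  { unfold ip; rewrite zsum_Dp_mul, zsum_opp; [reflexivity | exact Hw|].
    apply in_l2_Dc, in_l2_half_sq, Ha. }
  assert (HnormM : l2norm dx (Dp dx (Dc dx a)) ^ 2 = dx * M).
  { rewrite l2norm_sq by (lra || apply in_l2_Dp, in_l2_Dc, Ha).
    unfold M; rewrite <- (zsum_shift 1 (fun j => Dm dx (Dc dx a) j ^ 2))
      by (apply in_l2_Dm, in_l2_Dc, Ha).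
    f_equal; apply zsum_ext; intro j; rewrite Dp_eq_Dm_succ; reflexivity. }
  pose proof (zsum_neg_mul_Dm_Dc_half_sq_le dx eps L a Hdx Heps Ha HL) as Hbound.
  pose proof (zsum_Dp_pow4_le dx a L Ha HL) as HGN.
  fold W M S4 in Hbound, HGN.
  assert (HL0 : 0 <= L) by (pose proof (Rabs_pos (a 0%Z)); pose proof (HL 0%Z); lra).
  assert (HS4 : / (2 * eps) * S4 <= 9 * L ^ 2 / eps / 2 * W).
  { replace (9 * L ^ 2 / eps / 2 * W) with (/ (2 * eps) * (9 * L ^ 2 * W)) by (field; lra).
    apply Rmult_le_compat_l; [left; apply Rinv_0_lt_compat; lra | exact HGN]. }
  rewrite Hparts, HnormM, l2norm_sq by (lra || exact Hw); fold W.
  apply Rle_trans with (dx * ((L / 2 + eps / 2) * W + L * M + 9 * L ^ 2 / eps / 2 * W)).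
  - apply Rmult_le_compat_l; lra.
  - right; field; lra.
Qed.

Theorem lemma10 (dx : R) (a : zseq) (gamma : R) :
  0 < dx -> in_l2 a -> 0 <= gamma < 1/2 ->
  ip dx (Dp dx (Dp dx (Dm dx a))) (Dc dx (fun j => a j ^ 2 / 2))
  <= (Rpower dx (1/2 - gamma) + linf a
      + 9 * linf a ^ 2 * Rpower dx (gamma - 1/2)) / 2
       * l2norm dx (Dp dx (Dm dx a)) ^ 2
     + linf a * l2norm dx (Dp dx (Dc dx a)) ^ 2.
Proof.
  (* Only [Rpower dx (1/2 - gamma) > 0] matters: the bound holds for every real gamma. *)
  intros Hdx Ha _.
  assert (Heps : 0 < Rpower dx (1/2 - gamma)) by apply exp_pos.
  replace (Rpower dx (gamma - 1/2)) with (/ Rpower dx (1/2 - gamma))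
    by (rewrite <- Rpower_Ropp; f_equal; ring).
  apply ip_Dp_Dp_Dm_Dc_half_sq_le; auto.
  intro j; apply linf_ge, Ha.
Qed.
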